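(* Let $G$ be a chordal graph and $(T,\mathcal{S})$ a subtree model of $G$. Let $C,C',C''$ be three distinct maximal cliques of $G$. If the clique subtree $S_T(C')$ intersects the connecting path $p(S_T(C),S_T(C''))$, then $C'$ is a separator in $G$ (i.e. some two vertices of $G-C'$ lie in different connected components of $G-C'$).
   Context: A subtree model of a graph $G$ is a pair $(T,\mathcal{S})$ where $T$ is a tree and $\mathcal{S}=\{S_v \mid v\in V(G)\}$ is a family of connected subtrees of $T$ such that for any two distinct vertices $u,v$, $S_u\cap S_v\neq\emptyset$ iff $uv\in E(G)$. For a maximal clique $C$ of $G$, the clique subtree is $S_T(C)=\bigcap_{v\in C}S_v$; by the Helly property it is nonempty, and clique subtrees of distinct maximal cliques are disjoint. For two disjoint subtrees $S,S'$ of $T$, the connecting path $p(S,S')$ is the minimal subgraph $P$ of $T$ (a path) such that $S\cup S'\cup P$ is connected; it contains exactly one node of $S$ and one node of $S'$. *)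

From mathcomp Require Import all_boot.
Set Implicit Arguments. Unset Strict Implicit. Unset Printing Implicit Defensive.

Definition simple_graph (V : finType) (g : rel V) : Prop :=
  symmetric g /\ irreflexive g.

Definition chordal (V : finType) (g : rel V) : Prop :=
  forall s : seq V, uniq s -> 4 <= size s -> cycle g s ->
    exists x y, [/\ x \in s, y \in s, x != y, g x y
                 & (y != next s x) && (x != next s y)].

Definition is_tree (N : finType) (t : rel N) : Prop :=
  [/\ simple_graph t,
      (forall x y : N, connect t x y)
    & (forall s : seq N, uniq s -> 3 <= size s -> ~~ cycle t s)].

Definition restrict (T : finType) (e : rel T) (A : {set T}) : rel T :=
  [rel x y | [&& e x y, x \in A & y \in A]].

Definition subtree (N : finType) (t : rel N) (A : {set N}) : Prop :=
  A != set0 /\ {in A &, forall x y, connect (restrict t A) x y}.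

Definition subtree_model (V N : finType) (g : rel V) (t : rel N)
    (S : V -> {set N}) : Prop :=
  [/\ is_tree t,
      (forall v, subtree t (S v))
    & (forall u v, u != v -> (S u :&: S v != set0) = g u v)].

Definition clique (V : finType) (g : rel V) (C : {set V}) : Prop :=
  {in C &, forall x y, x != y -> g x y}.

Definition maximal_clique (V : finType) (g : rel V) (C : {set V}) : Prop :=
  clique g C /\ (forall D : {set V}, clique g D -> C \subset D -> D = C).

Definition clique_subtree (V N : finType) (S : V -> {set N}) (C : {set V})
  : {set N} := \bigcap_(v in C) S v.

(* P is the node set of the connecting path p(A,B) of two subtrees:
   a simple path x :: p in t starting in A, ending in B, whose other
   nodes are outside A and B (so it has exactly one node of each). *)
Definition connecting_path (N : finType) (t : rel N) (A B P : {set N}) : Prop :=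
  exists (x : N) (p : seq N),
    [/\ path t x p, uniq (x :: p), x \in A, last x p \in B
      & P = [set z in x :: p]] /\
    (forall z, z \in x :: p -> (z \in A -> z = x) /\ (z \in B -> z = last x p)).

Definition separator (V : finType) (g : rel V) (C : {set V}) : Prop :=
  exists u w, [/\ u \notin C, w \notin C & ~~ connect (restrict g (~: C)) u w].

From mathcomp Require Import all_boot.
Set Implicit Arguments. Unset Strict Implicit. Unset Printing Implicit Defensive.

(* Pick u in C \ C' and w in C'' \ C'.  If u and w were joined by a path
   avoiding C', the union of the subtrees S_v, v outside C', would be a
   connected part of T containing a node of S_T(C) (inside S_u) and the node
   of S_T(C'') (inside S_w).  In a tree every walk between two nodes passes
   through all nodes of the simple path between them, so that union would
   contain a node z of S_T(C') on the connecting path; then z lies in some S_v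
   with v outside C', and v is adjacent to all of C', contradicting the
   maximality of C'. *)

Section Restrict.
Variables (T : finType) (e : rel T).

Lemma path_restrict (A : {set T}) x s :
  x \in A -> path (restrict e A) x s = path e x s && all (mem A) s.
Proof.
elim: s x => //= y s IH x xA.
case yA: (y \in A); last by rewrite /restrict /= yA !andbF.
by rewrite IH // /restrict /= xA yA !andbT andbA.
Qed.

Lemma connect_restrict_path (A : {set T}) x s :
  path e x s -> all (mem A) (x :: s) -> connect (restrict e A) x (last x s).
Proof.
move=> es /andP[xA sA]; apply/connectP; exists s => //.
by rewrite path_restrict // es.
Qed.

Lemma connect_restrictS (A B : {set T}) x y :
  A \subset B -> connect (restrict e A) x y -> connect (restrict e B) x y.
Proof.
move=> sAB /connectP[s es ->]; apply/connectP; exists s => //.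
apply: sub_path es => a b /and3P[eab aA bA].
by rewrite /restrict /= eab !(subsetP sAB).
Qed.

Lemma restrict_sym (A : {set T}) : symmetric e -> symmetric (restrict e A).
Proof. by move=> se a b; rewrite /restrict /= se; congr andb; apply: andbC. Qed.

Lemma all_setC1 (z : T) s : all (mem [set~ z]) s = (z \notin s).
Proof. by rewrite -has_pred1 -all_predC; apply: eq_all => a; rewrite /= in_setC1. Qed.

End Restrict.

Section Tree.
Variables (T : finType) (t : rel T).
Hypothesis t_sym : symmetric t.
Hypothesis t_acyclic : forall s : seq T, uniq s -> 3 <= size s -> ~~ cycle t s.

Lemma tree_cut_neighbours z y1 y2 :
  t z y1 -> t z y2 -> y1 != y2 -> ~~ connect (restrict t [set~ z]) y1 y2.
Proof.
(* A shortest path from y1 to y2 avoiding z closes up through z into a cycle. *)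
move=> zy1 zy2 y12; apply/negP => /connectP[r0 er0 lr0].
case: (shortenP er0) lr0 => {r0 er0} -[|a r] er ur _ lr; first by rewrite lr eqxx in y12.
have y1z : y1 \in [set~ z] by case/andP: er => /and3P[].
move: er; rewrite path_restrict // all_setC1 => /andP[tr zr].
have uz : uniq (z :: y1 :: a :: r).
  by rewrite cons_uniq ur inE negb_or zr eq_sym -in_setC1 y1z.
have cyc : cycle t (z :: y1 :: a :: r).
  by rewrite /cycle rcons_path last_cons -lr t_sym zy2 andbT
    -[path t z _]/(t z y1 && path t y1 (a :: r)) zy1 tr.
by move: cyc; apply/negP/t_acyclic.
Qed.

Lemma mem_tree_walk x p q z :
  path t x p -> uniq (x :: p) -> path t x q -> last x q = last x p ->
  z \in x :: p -> z \in x :: q.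
Proof.
move=> tp up tq lq; apply: contraLR => zq.
rewrite inE negb_or; have -> /= : z != x by apply: contraNneq zq => ->; rewrite mem_head.
apply/negP => /splitPr zp; case: zp tp up lq => p1 p2.
rewrite cat_path -cat_cons cat_uniq last_cat last_cons => /andP[tp1 /andP[ty1z tp2]].
case/and3P=> _ /hasPn disj /andP[zp2 _].
have zp1 : z \notin x :: p1 by apply: disj; rewrite mem_head.
case: p2 tp2 zp2 disj => [|y2 p3] /= tp2 zp2 disj lq.
  by move: (mem_last x q); rewrite lq (negbTE zq).
case/andP: tp2 => tzy2 tp3.
set E := restrict t [set~ z].
have E_sym : connect_sym E by apply/sym_connect_sym/restrict_sym.
have y1x : connect E (last x p1) x.
  by rewrite E_sym; apply: connect_restrict_path; rewrite ?all_setC1.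
have xlq : connect E x (last x q) by apply: connect_restrict_path; rewrite ?all_setC1.
have lqy2 : connect E (last x q) y2.
  by rewrite E_sym lq; apply: connect_restrict_path; rewrite ?all_setC1.
have y12 : last x p1 != y2.
  by apply: contraNneq (disj y2 _) => [<-|]; [exact: mem_last | rewrite !inE eqxx orbT].
have zy1 : t z (last x p1) by rewrite t_sym.
case/negP: (tree_cut_neighbours zy1 tzy2 y12).
exact: connect_trans (connect_trans y1x xlq) lqy2.
Qed.
End Tree.

Section Cliques.
Variables (V : finType) (g : rel V).

Lemma maximal_clique_subsetN (C D : {set V}) :
  maximal_clique g C -> clique g D -> C != D -> ~~ (C \subset D).
Proof. by case=> _ maxC cD; apply: contraNN => /(maxC D cD)->. Qed.

Lemma maximal_clique_setU1 (C : {set V}) v :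
  maximal_clique g C -> clique g (v |: C) -> v \in C.
Proof. by case=> _ maxC cvC; rewrite -(maxC _ cvC (subsetUr _ _)) setU11. Qed.

End Cliques.

Section SubtreeModel.
Variables (V N : finType) (g : rel V) (t : rel N) (S : V -> {set N}).
Hypothesis model : subtree_model g t S.

Lemma subtree_model_meet u v : g u v -> S u :&: S v != set0.
Proof.
have [_ subS modS] := model.
by have [-> _|uv] := eqVneq u v; [rewrite setIid; case: (subS v) | rewrite modS].
Qed.

Lemma clique_of_common_node (D : {set V}) z :
  (forall a, a \in D -> z \in S a) -> clique g D.
Proof.
have [_ _ modS] := model.
move=> zD a b aD bD ab; rewrite -modS //.
by apply/set0Pn; exists z; rewrite inE !zD.
Qed.

Lemma clique_subtree_meet_mem (C : {set V}) v z :
  maximal_clique g C -> z \in clique_subtree S C -> z \in S v -> v \in C.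
Proof.
move=> maxC /bigcapP zC zv; apply: maximal_clique_setU1 maxC _.
by apply: (@clique_of_common_node _ z) => a /setU1P[->|/zC].
Qed.

Lemma connect_bigcup_subtrees (K : {set V}) u v x y :
  u \in K -> connect (restrict g K) u v -> x \in S u -> y \in S v ->
  connect (restrict t (\bigcup_(w in K) S w)) x y.
Proof.
have [_ subS _] := model.
have in_subtree w x' y' : w \in K -> x' \in S w -> y' \in S w ->
    connect (restrict t (\bigcup_(w in K) S w)) x' y'.
  by move=> wK xw yw; apply: connect_restrictS (bigcup_sup w wK) _; apply: (subS w).2.
move=> uK /connectP[s gs ->]; elim: s u x uK gs => [|w s IH] u x uK /=.
  by move=> _; apply: in_subtree.
case/andP=> /and3P[guw _ wK] gs xu ys.
have /set0Pn[m /setIP[mu mw]] := subtree_model_meet guw.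
exact: connect_trans (in_subtree u x m uK xu mu) (IH w m wK gs mw ys).
Qed.

End SubtreeModel.

Theorem lemma4 (V N : finType) (g : rel V) (t : rel N) (S : V -> {set N})
    (C C' C'' : {set V}) (P : {set N}) :
  simple_graph g -> chordal g -> subtree_model g t S ->
  maximal_clique g C -> maximal_clique g C' -> maximal_clique g C'' ->
  C != C' -> C' != C'' -> C != C'' ->
  connecting_path t (clique_subtree S C) (clique_subtree S C'') P ->
  clique_subtree S C' :&: P != set0 ->
  separator g C'.
Proof.
move=> _ _ model maxC maxC' maxC'' CC' C'C'' _ [x [p [[tp up xC lC'' ->] _]]].
case/set0Pn=> z /setIP[zC']; rewrite inE => zp.
have [[[t_sym _] _ t_acyclic] _ _] := model.
have /subsetPn[u uC uC'] := maximal_clique_subsetN maxC maxC'.1 CC'.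
have /subsetPn[w wC'' wC'] : ~~ (C'' \subset C').
  by apply: maximal_clique_subsetN maxC'' maxC'.1 _; rewrite eq_sym.
exists u, w; split=> //; apply/negP => uw.
have uK : u \in ~: C' by rewrite inE.
have xu : x \in S u by move/bigcapP: xC; apply.
have lw : last x p \in S w by move/bigcapP: lC''; apply.
have /connectP[q Uq lq] := connect_bigcup_subtrees model uK uw xu lw.
have xU := subsetP (bigcup_sup u uK) x xu.
move: Uq; rewrite path_restrict // => /andP[tq qU].
have /bigcupP[v vK zv] : z \in \bigcup_(v in ~: C') S v.
  have := mem_tree_walk t_sym t_acyclic tp up tq (esym lq) zp.
  by case/predU1P=> [->|/(allP qU)].
by move: vK; rewrite inE (clique_subtree_meet_mem model maxC' zC' zv).
Qed.
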